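(* Consider the downlink RIS-aided multi-cell network described in the context, and let $L = \frac{T}{M_\text{B}M_\text{R}M_\text{U}+M_\text{B}M_\text{U}}$. Its area spectrum efficiency as a function of the unit training overhead $\beta\in[0,L)$ has the form $$\mathcal{A}(\beta) = K' \,\frac{T-\beta(M_\text{B}M_\text{R}M_\text{U}+M_\text{B}M_\text{U})}{T}\, p_{\text{E}_\text{B}}(\sigma_\text{B},\theta_\text{B})\, p_{\text{E}_\text{U}}(\sigma_\text{U},\theta_\text{U}),$$ with $K'>0$ independent of $\beta$. Then the optimal unit training overhead $\beta^*_\mathcal{A}\in(0,L)$ maximizing $\mathcal{A}$ satisfies $$\frac{\text{SNR}}{\sqrt{\pi}\, f(\beta^*_\mathcal{A})}\left(L-\beta^*_\mathcal{A}\right)\left(\frac{a e^{-a^2 f^2(\beta^*_\mathcal{A})}}{\operatorname{erf}(a f(\beta^*_\mathcal{A}))}+\frac{b e^{-b^2 f^2(\beta^*_\mathcal{A})}}{\operatorname{erf}(b f(\beta^*_\mathcal{A}))}-\frac{c e^{-c^2 f^2(\beta^*_\mathcal{A})}}{\operatorname{erf}(c f(\beta^*_\mathcal{A}))}-\frac{d e^{-d^2 f^2(\beta^*_\mathcal{A})}}{\operatorname{erf}(d f(\beta^*_\mathcal{A}))}\right)=1,$$ where $f(\beta)=\sqrt{1+\beta\,\text{SNR}}$, $a=\frac{\theta_\text{B}}{2\pi\sqrt{2k_\text{B}}}$, $b=\frac{\theta_\text{U}}{2\pi\sqrt{2k_\text{U}}}$, $c=\frac{1}{\sqrt{2k_\text{B}}}$,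 $d=\frac{1}{\sqrt{2k_\text{U}}}$.
   Context: Base stations (BSs) and user equipments (UEs) carry uniform linear arrays with $M_\text{B}\ge1$ and $M_\text{U}\ge1$ antennas; each reconfigurable intelligent surface (RIS) has $M_\text{R}$ reflecting elements. Beamwidths are $\theta_j=4/M_j$ (radians), $j\in\{\text{B},\text{U}\}$. A frame of length $T$ is split into a channel estimation phase of length $T_\text{E}=\beta(M_\text{B}M_\text{R}M_\text{U}+M_\text{B}M_\text{U})$ and a data phase of length $T_\text{D}=T-T_\text{E}$, where $\beta$ is the unit training overhead (training symbols per path). With average channel signal-to-noise ratio $\text{SNR}>0$, the estimation error variance is $\sigma_\text{E}^2=\frac{1}{1+\beta\,\text{SNR}}$, and the beam alignment error of end $j$ is a zero-mean Gaussian truncated to $[-\pi,\pi]$ with variance parameter $\sigma_j^2=k_j\pi^2\sigma_\text{E}^2$, $k_j\in(0,1]$. The alignment probability is $p_{\text{E}_j}(\sigma_j,\theta_j)=\operatorname{erf}\!\left(\frac{\theta_j}{2\sqrt{2\sigma_j^2}}\right)\Big/\operatorname{erf}\!\left(\frac{\pi}{\sqrt{2\sigma_j^2}}\right)$. The area spectrum efficiency is $\mathcal{A}=\frac{T_\text{D}}{T}\lambda_\text{B}\,\mathbb{E}[\log_2(1+\text{SINR})\,\mathbb{I}\{\text{SINR}>\tau\}]$, with $\lambda_\text{B}$ the BS density and $\tau$ an SINR threshold; the serving link's beamforming gain equals $N_\text{B}N_\text{U}$ with probability $p_{\text{E}_\text{B}}p_{\text{E}_\text{U}}$ and $0$ otherwise,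 and all remaining factors (geometry, blockage, interference, noise) form the constant $K'>0$ independent of $\beta$. *)

From Stdlib Require Import Reals.
From Coquelicot Require Import Coquelicot.
Open Scope R_scope.

Definition erf (x : R) : R :=
  2 / sqrt PI * RInt (fun t => exp (- t ^ 2)) 0 x.

Definition beamwidth (M : nat) : R := 4 / INR M.

Definition npaths (MB MR MU : nat) : R :=
  INR MB * INR MR * INR MU + INR MB * INR MU.

Definition sigmaE2 (SNR beta : R) : R := 1 / (1 + beta * SNR).

Definition sigma2 (k SNR beta : R) : R := k * PI ^ 2 * sigmaE2 SNR beta.

(* alignment probability p_E(sigma, theta), written with sigma^2 *)
Definition pE (s2 theta : R) : R :=
  erf (theta / (2 * sqrt (2 * s2))) / erf (PI / sqrt (2 * s2)).

Definition ASE (K' T SNR kB kU : R) (MB MR MU : nat) (beta : R) : R :=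
  K' * ((T - beta * npaths MB MR MU) / T)
     * pE (sigma2 kB SNR beta) (beamwidth MB)
     * pE (sigma2 kU SNR beta) (beamwidth MU).

From Stdlib Require Import Reals Lra Lia.
From Coquelicot Require Import Coquelicot.
Open Scope R_scope.

(* With f(beta) = sqrt(1 + beta SNR) one has sqrt(2 sigma_j^2) = sqrt(2 k_j) pi / f,
   so each alignment probability is a ratio erf(alpha f) / erf(gamma f) and the
   ASE is a differentiable product of positive factors on (0, L).  At an interior
   maximiser its derivative vanishes (Fermat), and dividing by the positive ASE
   leaves the vanishing of the logarithmic derivative
   -N / (T - beta N) + sum (+-) u'/u.  The chain rule with
   erf' = 2/sqrt(pi) exp(-x^2) and f' = SNR / (2 f) turns this into the stated
   equation. *)

Lemma Rminus_mul_gt0_of_lt_div (T N x : R) : 0 < N -> x < T / N -> 0 < T - x * N.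
Proof.
  intros HN Hx; apply Rlt_0_minus.
  replace T with (T / N * N) by (field; lra).
  apply Rmult_lt_compat_r; assumption.
Qed.

Lemma is_derive_interior_max_eq0 (g : R -> R) (lo hi x l : R) :
  lo < x < hi -> (forall y, lo < y < hi -> g y <= g x) ->
  is_derive g x l -> l = 0.
Proof.
  intros [Hlo Hhi] Hmax Hd.
  apply is_derive_Reals in Hd.
  exact (deriv_maximum g lo hi x (exist _ l Hd) Hlo Hhi
           (fun y Hy1 Hy2 => Hmax y (conj Hy1 Hy2))).
Qed.

Lemma continuous_exp_neg_sq (x : R) : continuous (fun t : R => exp (- t ^ 2)) x.
Proof. apply (ex_derive_continuous (V := R_NormedModule)); auto_derive; auto. Qed.

Lemma is_derive_erf x : is_derive erf x (2 / sqrt PI * exp (- x ^ 2)).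
Proof.
  unfold erf; apply (is_derive_scal (fun y => RInt (fun t => exp (- t ^ 2)) 0 y)).
  apply (is_derive_RInt (fun t => exp (- t ^ 2)) _ 0 x).
  - apply filter_forall; intros y.
    apply (RInt_correct (V := R_CompleteNormedModule)).
    apply (ex_RInt_continuous (V := R_CompleteNormedModule)).
    intros z _; apply continuous_exp_neg_sq.
  - apply continuous_exp_neg_sq.
Qed.

Lemma erf_gt0 x : 0 < x -> 0 < erf x.
Proof.
  intros Hx; unfold erf; apply Rmult_lt_0_compat.
  - apply Rdiv_lt_0_compat; [lra | apply sqrt_lt_R0, PI_RGT_0].
  - apply RInt_gt_0; auto.
    + intros; apply exp_pos.
    + intros; apply continuous_exp_neg_sq.
Qed.

Lemma is_derive_erf_sqrt_affine (al S x : R) : 0 < 1 + x * S ->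
  is_derive (fun y => erf (al * sqrt (1 + y * S))) x
    (al * S / (sqrt PI * sqrt (1 + x * S)) * exp (- (al * sqrt (1 + x * S)) ^ 2)).
Proof.
  intros Hp.
  assert (Hf : 0 < sqrt (1 + x * S)) by (apply sqrt_lt_R0; lra).
  assert (HsPI : 0 < sqrt PI) by (apply sqrt_lt_R0, PI_RGT_0).
  assert (Hinner : is_derive (fun y => al * sqrt (1 + y * S)) x
                     (al * S / (2 * sqrt (1 + x * S)))).
  { auto_derive; [lra | field; lra]. }
  replace (al * S / (sqrt PI * sqrt (1 + x * S)) * exp (- (al * sqrt (1 + x * S)) ^ 2))
    with (scal (al * S / (2 * sqrt (1 + x * S)))
            (2 / sqrt PI * exp (- (al * sqrt (1 + x * S)) ^ 2)))
    by (unfold scal; simpl; unfold mult; simpl; field; lra).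
  exact (is_derive_comp erf _ x _ _ (is_derive_erf _) Hinner).
Qed.

Lemma is_derive_mul_ratios (g u1 u2 u3 u4 : R -> R) (dg d1 d2 d3 d4 x : R) :
  is_derive g x dg -> is_derive u1 x d1 -> is_derive u2 x d2 ->
  is_derive u3 x d3 -> is_derive u4 x d4 ->
  g x <> 0 -> u1 x <> 0 -> u2 x <> 0 -> u3 x <> 0 -> u4 x <> 0 ->
  is_derive (fun y => g y * (u1 y / u3 y) * (u2 y / u4 y)) x
    (g x * (u1 x / u3 x) * (u2 x / u4 x) *
       (dg / g x + d1 / u1 x + d2 / u2 x - d3 / u3 x - d4 / u4 x)).
Proof.
  intros Hg H1 H2 H3 H4 ng n1 n2 n3 n4.
  assert (H := is_derive_mult _ _ x _ _
                 (is_derive_mult _ _ x _ _ Hg (is_derive_div _ _ x _ _ H1 H3 n3)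
                    (fun _ _ => Rmult_comm _ _))
                 (is_derive_div _ _ x _ _ H2 H4 n4) (fun _ _ => Rmult_comm _ _)).
  match type of H with is_derive _ _ ?l => replace (_ * _) with l; [exact H |] end.
  unfold plus, mult; simpl; unfold mult; simpl; field; repeat split; auto.
Qed.

Lemma interior_max_log_derivative_eq0 (g u1 u2 u3 u4 : R -> R)
    (dg d1 d2 d3 d4 lo hi x : R) :
  lo < x < hi ->
  (forall y, lo < y < hi ->
     g y * (u1 y / u3 y) * (u2 y / u4 y) <= g x * (u1 x / u3 x) * (u2 x / u4 x)) ->
  is_derive g x dg -> is_derive u1 x d1 -> is_derive u2 x d2 ->
  is_derive u3 x d3 -> is_derive u4 x d4 ->
  0 < g x -> 0 < u1 x -> 0 < u2 x -> 0 < u3 x -> 0 < u4 x ->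
  dg / g x + d1 / u1 x + d2 / u2 x - d3 / u3 x - d4 / u4 x = 0.
Proof.
  intros Hx Hmax Hg H1 H2 H3 H4 pg p1 p2 p3 p4.
  assert (HD := is_derive_mul_ratios g u1 u2 u3 u4 _ _ _ _ _ x Hg H1 H2 H3 H4
                  (Rgt_not_eq _ _ pg) (Rgt_not_eq _ _ p1) (Rgt_not_eq _ _ p2)
                  (Rgt_not_eq _ _ p3) (Rgt_not_eq _ _ p4)).
  apply (is_derive_interior_max_eq0 (fun y => g y * (u1 y / u3 y) * (u2 y / u4 y))
           lo hi x _ Hx Hmax) in HD.
  apply Rmult_integral in HD as [Hval | Hcrit]; [exfalso | exact Hcrit].
  revert Hval; apply Rgt_not_eq.
  apply Rmult_lt_0_compat; [apply Rmult_lt_0_compat |]; try apply Rdiv_lt_0_compat; assumption.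
Qed.

Lemma pE_sigma2 (k th SNR y : R) : 0 < k -> 0 < 1 + y * SNR ->
  pE (sigma2 k SNR y) th =
  erf (th / (2 * PI * sqrt (2 * k)) * sqrt (1 + y * SNR)) /
  erf (1 / sqrt (2 * k) * sqrt (1 + y * SNR)).
Proof.
  intros Hk Hp.
  assert (Hf : 0 < sqrt (1 + y * SNR)) by (apply sqrt_lt_R0; lra).
  assert (Hk2 : 0 < sqrt (2 * k)) by (apply sqrt_lt_R0; lra).
  assert (HPI := PI_RGT_0).
  assert (Hs : sqrt (2 * sigma2 k SNR y) = sqrt (2 * k) * PI / sqrt (1 + y * SNR)).
  { apply sqrt_lem_1.
    - unfold sigma2, sigmaE2.
      assert (0 < 1 / (1 + y * SNR)) by (apply Rdiv_lt_0_compat; lra).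
      assert (0 < PI ^ 2) by (apply pow_lt; lra).
      apply Rlt_le, Rmult_lt_0_compat; [lra |].
      apply Rmult_lt_0_compat; [apply Rmult_lt_0_compat |]; assumption.
    - apply Rlt_le, Rdiv_lt_0_compat; nra.
    - unfold sigma2, sigmaE2.
      replace (sqrt (2 * k) * PI / sqrt (1 + y * SNR) * (sqrt (2 * k) * PI / sqrt (1 + y * SNR)))
        with (sqrt (2 * k) * sqrt (2 * k) * PI ^ 2 / (sqrt (1 + y * SNR) * sqrt (1 + y * SNR)))
        by (field; lra).
      rewrite !sqrt_sqrt by lra; field; lra. }
  unfold pE; rewrite Hs; f_equal; f_equal; field; lra.
Qed.

Lemma ASE_erf_ratios (K' T SNR kB kU : R) (MB MR MU : nat) (y : R) :
  0 < kB -> 0 < kU -> 0 < 1 + y * SNR ->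
  ASE K' T SNR kB kU MB MR MU y =
  K' * ((T - y * npaths MB MR MU) / T)
    * (erf (beamwidth MB / (2 * PI * sqrt (2 * kB)) * sqrt (1 + y * SNR))
       / erf (1 / sqrt (2 * kB) * sqrt (1 + y * SNR)))
    * (erf (beamwidth MU / (2 * PI * sqrt (2 * kU)) * sqrt (1 + y * SNR))
       / erf (1 / sqrt (2 * kU) * sqrt (1 + y * SNR))).
Proof. intros HkB HkU Hp; unfold ASE; rewrite !pE_sigma2 by lra; reflexivity. Qed.

Lemma npaths_gt0 (MB MR MU : nat) :
  (1 <= MB)%nat -> (1 <= MR)%nat -> (1 <= MU)%nat -> 0 < npaths MB MR MU.
Proof.
  intros HB HR HU; unfold npaths.
  assert (0 < INR MB) by (apply lt_0_INR; lia).
  assert (0 < INR MR) by (apply lt_0_INR; lia).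
  assert (0 < INR MU) by (apply lt_0_INR; lia).
  apply Rplus_lt_0_compat; repeat apply Rmult_lt_0_compat; assumption.
Qed.

Lemma beamwidth_gt0 (M : nat) : (1 <= M)%nat -> 0 < beamwidth M.
Proof.
  intros HM; unfold beamwidth; apply Rdiv_lt_0_compat; [lra |].
  apply lt_0_INR; lia.
Qed.

Lemma alignment_scale_gt0 (th k : R) : 0 < th -> 0 < k -> 0 < th / (2 * PI * sqrt (2 * k)).
Proof.
  intros Hth Hk; assert (HPI := PI_RGT_0).
  assert (0 < sqrt (2 * k)) by (apply sqrt_lt_R0; lra).
  apply Rdiv_lt_0_compat; [lra | nra].
Qed.

Lemma ASE_interior_max_stationary (K' T SNR kB kU : R) (MB MR MU : nat) (x : R) :
  (1 <= MB)%nat -> (1 <= MR)%nat -> (1 <= MU)%nat ->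
  0 < T -> 0 < SNR -> 0 < kB -> 0 < kU -> 0 < K' ->
  0 < x < T / npaths MB MR MU ->
  (forall y, 0 < y < T / npaths MB MR MU ->
     ASE K' T SNR kB kU MB MR MU y <= ASE K' T SNR kB kU MB MR MU x) ->
  let fx := sqrt (1 + x * SNR) in
  let a := beamwidth MB / (2 * PI * sqrt (2 * kB)) in
  let b := beamwidth MU / (2 * PI * sqrt (2 * kU)) in
  let c := 1 / sqrt (2 * kB) in
  let d := 1 / sqrt (2 * kU) in
  SNR / (sqrt PI * fx) *
    (a * exp (- (a * fx) ^ 2) / erf (a * fx)
     + b * exp (- (b * fx) ^ 2) / erf (b * fx)
     - c * exp (- (c * fx) ^ 2) / erf (c * fx)
     - d * exp (- (d * fx) ^ 2) / erf (d * fx))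
  = npaths MB MR MU / (T - x * npaths MB MR MU).
Proof.
  intros HMB HMR HMU HT HS HkB HkU HK Hx Hmax fx a b c d.
  assert (HN := npaths_gt0 MB MR MU HMB HMR HMU); set (N := npaths MB MR MU) in *.
  assert (HTN := Rminus_mul_gt0_of_lt_div T N x HN (proj2 Hx)).
  assert (Hp : forall y, 0 <= y -> 0 < 1 + y * SNR)
    by (intros; assert (0 <= y * SNR) by (apply Rmult_le_pos; lra); lra).
  assert (Hpx := Hp x (Rlt_le _ _ (proj1 Hx))).
  assert (Hfx : 0 < fx) by (apply sqrt_lt_R0; lra).
  assert (HsPI : 0 < sqrt PI) by (apply sqrt_lt_R0, PI_RGT_0).
  assert (HE : forall al, 0 < al -> 0 < erf (al * fx))
    by (intros; apply erf_gt0, Rmult_lt_0_compat; assumption).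
  assert (Hc : forall k, 0 < k -> 0 < 1 / sqrt (2 * k))
    by (intros; apply Rdiv_lt_0_compat; [lra | apply sqrt_lt_R0; lra]).
  assert (HEa := HE a (alignment_scale_gt0 _ _ (beamwidth_gt0 MB HMB) HkB)).
  assert (HEb := HE b (alignment_scale_gt0 _ _ (beamwidth_gt0 MU HMU) HkU)).
  assert (HEc := HE c (Hc kB HkB)); assert (HEd := HE d (Hc kU HkU)).
  set (u := fun al y => erf (al * sqrt (1 + y * SNR))).
  set (g := fun y => K' * ((T - y * N) / T)).
  assert (Hmax' : forall y, 0 < y < T / N ->
            g y * (u a y / u c y) * (u b y / u d y)
            <= g x * (u a x / u c x) * (u b x / u d x)).
  { intros y Hy; unfold g, u, a, b, c, d, N.
    rewrite <- !ASE_erf_ratios by (try apply Hp; lra).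
    apply Hmax; lra. }
  assert (Hg0 : 0 < g x)
    by (apply Rmult_lt_0_compat; [lra | apply Rdiv_lt_0_compat; lra]).
  assert (Hg : is_derive g x (- K' * N / T))
    by (unfold g; auto_derive; [auto | field; lra]).
  assert (Hcrit := interior_max_log_derivative_eq0 g (u a) (u b) (u c) (u d)
    _ _ _ _ _ 0 (T / N) x Hx Hmax' Hg
    (is_derive_erf_sqrt_affine a SNR x Hpx) (is_derive_erf_sqrt_affine b SNR x Hpx)
    (is_derive_erf_sqrt_affine c SNR x Hpx) (is_derive_erf_sqrt_affine d SNR x Hpx)
    Hg0 HEa HEb HEc HEd).
  unfold g, u in Hcrit; change (sqrt (1 + x * SNR)) with fx in Hcrit.
  apply (Rplus_eq_reg_l (- N / (T - x * N))); transitivity 0.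
  - rewrite <- Hcrit; field; repeat split; lra.
  - field; lra.
Qed.

Theorem corollary2
  (MB MR MU : nat) (T SNR kB kU K' beta_star : R) :
  (1 <= MB)%nat -> (1 <= MR)%nat -> (1 <= MU)%nat ->
  0 < T -> 0 < SNR -> 0 < kB <= 1 -> 0 < kU <= 1 -> 0 < K' ->
  let L := T / npaths MB MR MU in
  0 < beta_star < L ->
  (forall beta, 0 <= beta < L ->
     ASE K' T SNR kB kU MB MR MU beta <= ASE K' T SNR kB kU MB MR MU beta_star) ->
  let f := fun beta => sqrt (1 + beta * SNR) in
  let a := beamwidth MB / (2 * PI * sqrt (2 * kB)) in
  let b := beamwidth MU / (2 * PI * sqrt (2 * kU)) in
  let c := 1 / sqrt (2 * kB) in
  let d := 1 / sqrt (2 * kU) in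
  let fs := f beta_star in
  SNR / (sqrt PI * fs) * (L - beta_star) *
    (a * exp (- a ^ 2 * fs ^ 2) / erf (a * fs)
     + b * exp (- b ^ 2 * fs ^ 2) / erf (b * fs)
     - c * exp (- c ^ 2 * fs ^ 2) / erf (c * fs)
     - d * exp (- d ^ 2 * fs ^ 2) / erf (d * fs)) = 1.
Proof.
  intros HMB HMR HMU HT HS HkB HkU HK L Hb Hmax; cbv zeta.
  assert (HN := npaths_gt0 MB MR MU HMB HMR HMU).
  assert (Hstat := ASE_interior_max_stationary K' T SNR kB kU MB MR MU beta_star
                     HMB HMR HMU HT HS (proj1 HkB) (proj1 HkU) HK Hb
                     (fun y Hy => Hmax y (conj (Rlt_le _ _ (proj1 Hy)) (proj2 Hy)))).
  cbv zeta in Hstat.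
  assert (Hsq : forall al, - al ^ 2 * sqrt (1 + beta_star * SNR) ^ 2
                          = - (al * sqrt (1 + beta_star * SNR)) ^ 2) by (intros; ring).
  rewrite !Hsq, Rmult_assoc, (Rmult_comm (L - beta_star)), <- Rmult_assoc, Hstat.
  assert (HTN := Rminus_mul_gt0_of_lt_div T _ beta_star HN (proj2 Hb)).
  unfold L; field; lra.
Qed.
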